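(* Let $r\in\{3,5\}$, let $D=\mathrm{D}_{2r}$ be the dihedral group of order $2r$, and let $S\subseteq D$ with $S=S^{-1}$. Then there exists a nontrivial automorphism $\beta$ of $D$ that fixes $S$ setwise and inverts every element of the subgroup of order $r$ of $D$. *)

From mathcomp Require Import all_boot all_fingroup all_solvable.
Set Implicit Arguments. Unset Strict Implicit. Unset Printing Implicit Defensive.

From mathcomp Require Import all_boot all_fingroup all_solvable zify.

(* Write the dihedral group as H <*> <[y]> with H = <[x]> of odd order r.  The
   elements outside H form the coset H :* y and are involutions inverting H, so
   conjugation by any of them is a nontrivial automorphism inverting H; it fixes
   S :&: H because S is symmetric.  Since #|H| is odd, squaring is onto H, and
   for outer s, t the outer element c * s with c ^+ 2 = t * s^-1 swaps s and t.
   Hence every set of at most two outer elements, and its complement among the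
   r outer elements, is fixed by some outer conjugation; as r <= 5, this covers
   S :\: H.  Subgroups of odd order r contain no involution, so they are H. *)

Set Implicit Arguments.
Unset Strict Implicit.
Unset Printing Implicit Defensive.

Local Open Scope group_scope.

Section OddOrder.

Variables (gT : finGroupType) (G : {group gT}).
Hypothesis oddG : odd #|G|.

Lemma odd_order_sqrt g : g \in G -> exists2 c, c \in G & c ^+ 2 = g.
Proof.
move=> Gg; exists (g ^+ (#|G|.+1)./2); first exact: groupX.
by rewrite -expgM muln2 halfK /= oddG subn0 expgSr expg_cardG ?mul1g.
Qed.

Lemma odd_order_involution_eq1 g : g \in G -> g ^+ 2 = 1 -> g = 1.
Proof.
move=> Gg g2; apply/eqP; rewrite -order_eq1 -dvdn1.
have /eqP <- : coprime #|G| 2 by rewrite coprimen2.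
by rewrite dvdn_gcd (order_dvdG Gg) order_dvdn g2 eqxx.
Qed.

End OddOrder.

Section GeneralizedDihedral.

Variables (gT : finGroupType) (H : {group gT}) (y : gT).
Hypotheses (y2 : y ^+ 2 = 1) (yNH : y \notin H).
Hypothesis conjyH : {in H, forall a, a ^ y = a^-1}.
Hypothesis cardG : #|[set: gT]| = #|H|.*2.

Lemma abelianH : abelian H.
Proof.
apply/centsP => a Ha b Hb; have := conjyH (groupM Ha Hb).
rewrite conjMg !conjyH // invMg => /(congr1 invg).
by rewrite !invMg !invgK.
Qed.

Lemma setCH_rcoset : ~: H = H :* y.
Proof.
apply/eqP; rewrite eq_sym eqEcard card_rcoset.
have -> : #|~: H| = #|H| by have := cardsC H; rewrite -cardsT cardG -addnn => /addnI.
rewrite leqnn andbT; apply/subsetP => _ /rcosetP[a Ha ->].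
by rewrite inE groupMl.
Qed.

Lemma mem_mulg_outer a s : a \in H -> s \in ~: H -> a * s \in ~: H.
Proof. by move=> Ha; rewrite !inE groupMl. Qed.

Lemma outer_mulgC s a : s \in ~: H -> a \in H -> s * a = a^-1 * s.
Proof.
rewrite setCH_rcoset => /rcosetP[c Hc ->] Ha.
have ya : y * a = a^-1 * y by rewrite [RHS]conjgC conjyH ?groupV // invgK.
by rewrite -mulgA ya !mulgA (centsP abelianH c) ?groupV.
Qed.

Lemma outer_involution s : s \in ~: H -> s ^+ 2 = 1.
Proof.
rewrite setCH_rcoset => /rcosetP[c Hc ->].
have yNH' : y \in ~: H by rewrite inE.
by rewrite expgS expg1 -mulgA (mulgA y) (outer_mulgC yNH' Hc) !mulgA mulgV mul1g -y2.
Qed.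

Lemma invg_outer s : s \in ~: H -> s^-1 = s.
Proof. by move/outer_involution=> s2; apply/eqP; rewrite eq_invg_mul -s2. Qed.

Lemma conjg_outer a s : a \in H -> s \in ~: H -> a ^ s = a^-1.
Proof.
move=> Ha Hs; have Hs' : s^-1 \in ~: H by rewrite inE groupV -in_setC.
by rewrite conjgE mulgA (outer_mulgC Hs' Ha) mulgVK.
Qed.

Lemma conj_outer_outer s c : s \in ~: H -> c \in H -> s ^ (c * s) = c ^+ 2 * s.
Proof.
move=> Hs Hc; rewrite conjgM [s ^ c]conjgE (outer_mulgC Hs Hc) mulgA conjMg.
by rewrite conjg_outer ?groupM ?groupV // invMg invgK conjgE mulKg.
Qed.

Hypothesis oddH : odd #|H|.

Lemma outer_conj_transitive s t :
  s \in ~: H -> t \in ~: H -> exists2 z, z \in ~: H & s ^ z = t.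
Proof.
move=> Hs Ht; have Hts : t * s^-1 \in H.
  move: Hs Ht; rewrite setCH_rcoset => /rcosetP[a Ha ->] /rcosetP[b Hb ->].
  by rewrite invMg mulgA mulgK groupM ?groupV.
have [c Hc c2] := odd_order_sqrt oddH Hts.
by exists (c * s); rewrite ?mem_mulg_outer // conj_outer_outer // c2 mulgVK.
Qed.

Lemma conjsg_outer z : z \in ~: H -> H :^ z = H.
Proof.
move=> Hz; apply/eqP; rewrite eqEcard cardJg leqnn andbT.
by apply/subsetP=> _ /imsetP[a Ha ->]; rewrite conjg_outer ?groupV.
Qed.

Lemma small_outer_set_fixed (T : {set gT}) : T \subset ~: H -> #|T| <= 2 ->
  exists2 z, z \in ~: H & T :^ z = T.
Proof.
move=> sTH; rewrite leq_eqVlt ltnS leq_eqVlt ltnS leqn0 cards_eq0.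
case/or3P=> [/cards2P[s [t [_ defT]]] | /cards1P[s defT] | /eqP->].
- have [Hs Ht] : s \in ~: H /\ t \in ~: H.
    by split; apply: (subsetP sTH); rewrite defT !inE eqxx ?orbT.
  have [z Hz szt] := outer_conj_transitive Hs Ht.
  have tzs : t ^ z = s.
    by rewrite -szt -conjgM [z * z]outer_involution ?conjg1.
  by exists z; rewrite // defT conjUg !conjg_set1 szt tzs setUC.
- have Hs : s \in ~: H by apply: (subsetP sTH); rewrite defT set11.
  by exists s; rewrite // defT conjg_set1 conjgE mulKg.
- by exists y; rewrite ?conj0g ?inE.
Qed.

Lemma outer_set_fixed (T : {set gT}) : #|H| <= 5 -> T \subset ~: H ->
  exists2 z, z \in ~: H & T :^ z = T.
Proof.
move=> le_H5 sTH; set U := ~: H :\: T.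
have cardTU : #|T| + #|U| = #|H|.
  by rewrite -(card_rcoset H y) -setCH_rcoset -(cardsID T (~: H)) (setIidPr sTH).
have [le_T2 | lt2T] := leqP #|T| 2; first exact: small_outer_set_fixed.
have [|z Hz fixU] := @small_outer_set_fixed U (subsetDl _ _).
  by rewrite -(leq_add2l #|T|) cardTU (leq_trans le_H5) // addn2.
exists z => //; have defT : T = ~: H :\: U by rewrite setDDr setDv set0U (setIidPr sTH).
by rewrite defT conjDg fixU conjCg conjsg_outer.
Qed.

Lemma symmetric_set_fixed (S : {set gT}) : #|H| <= 5 -> S^-1 = S ->
  exists2 z, z \in ~: H & S :^ z = S.
Proof.
move=> le_H5 invS; have [z Hz fixSH] := outer_set_fixed le_H5 (subsetIr S (~: H)).
exists z => //; apply/setP=> g; rewrite mem_conjg invg_outer //.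
have [Hg | H'g] := boolP (g \in H); first by rewrite conjg_outer // -mem_invg invS.
have H'gz : g ^ z \in ~: H by rewrite -(conjsg_outer Hz) -conjCg memJ_conjg inE.
transitivity (g ^ z \in S :&: ~: H); first by rewrite inE H'gz andbT.
by rewrite -fixSH memJ_conjg !inE H'g andbT.
Qed.

Lemma odd_subgroup_sub (K : {group gT}) : odd #|K| -> K \subset H.
Proof.
move=> oddK; apply/subsetP=> g Kg; apply: contraT => H'g.
have H'g' : g \in ~: H by rewrite inE.
by move: H'g; rewrite (odd_order_involution_eq1 oddK Kg (outer_involution H'g')) group1.
Qed.

Theorem generalized_dihedral_symmetric_aut (S : {set gT}) :
    1 < #|H| <= 5 -> S^-1 = S ->
  exists2 beta : {perm gT}, beta \in Aut [set: gT] &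
    [/\ beta != 1, beta @: S = S &
        forall K : {group gT}, #|K| = #|H| ->
          forall g, g \in K -> beta g = g^-1].
Proof.
case/andP=> gt1_H le_H5 invS; have [z Hz fixS] := symmetric_set_fixed le_H5 invS.
have betaE g : conj_aut [set: gT] z g = g ^ z by rewrite conj_autE ?inE.
exists (conj_aut [set: gT] z); first exact: Aut_aut.
split=> [|| K oK g Kg].
- have [a Ha nt_a] : exists2 a, a \in H & a != 1.
    by apply/trivgPn; rewrite trivg_card1 neq_ltn gt1_H orbT.
  apply: contra_neq nt_a => beta1; apply: (odd_order_involution_eq1 oddH Ha).
  have := betaE a; rewrite beta1 perm1 conjg_outer // => aV.
  by rewrite expgS expg1 {1}aV mulVg.
- by rewrite -[RHS]fixS; apply: eq_imset.
- rewrite betaE conjg_outer //; apply: (subsetP (odd_subgroup_sub _)) Kg.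
  by rewrite oK.
Qed.

End GeneralizedDihedral.

Lemma dihedral_generators r : 1 < r ->
  exists x y : 'D_r.*2, [/\ #[x] = r, y ^+ 2 = 1, y \notin <[x]>
                         & {in <[x]>, forall a, a ^ y = a^-1}].
Proof.
move=> gt1_r; have := isoGrp_hom (Grp_dihedral gt1_r).
case/existsP=> -[x y] /= /eqP[defG xr y2 xy].
have conjyX : {in <[x]>, forall a, a ^ y = a^-1}.
  by move=> _ /cycleP[i ->]; rewrite conjXg xy expVgn.
have card_XY : #|<[x]> * <[y]>| = r.*2.
  by rewrite -norm_joinEr ?norms_cycle ?xy ?groupV ?cycle_id // defG card_dihedral.
have ox : #[x] = r.
  have le_XY : #|<[x]> * <[y]>| <= #[x] * 2.
    rewrite (leq_trans (leq_pmulr _ (cardG_gt0 (<[x]> :&: <[y]>)))) // -mul_cardG.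
    by rewrite leq_mul // -orderE dvdn_leq // order_dvdn y2.
  rewrite muln2 card_XY leq_double in le_XY.
  by apply/eqP; rewrite eqn_leq le_XY dvdn_leq ?(ltnW gt1_r) ?order_dvdn ?xr.
exists x, y; split=> //; apply/negP=> Xy; move: card_XY.
by rewrite mulGSid ?cycle_subG // -orderE ox; lia.
Qed.

Theorem lemma4p9 (r : nat) (hr : (r == 3) || (r == 5))
    (S : {set 'D_(2 * r)}) (hS : S^-1 = S) :
  exists2 beta : {perm 'D_(2 * r)}, beta \in Aut 'D_(2 * r) &
    [/\ beta != 1, beta @: S = S &
        forall H : {group 'D_(2 * r)}, #|H| = r ->
          forall x, x \in H -> beta x = x^-1].
Proof.
have [gt1_r le_r5 odd_r] : [/\ 1 < r, r <= 5 & odd r] by case/orP: hr => /eqP->.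
move: S hS; rewrite mul2n => S hS.
have [x [y [ox y2 yNX conjyX]]] := dihedral_generators gt1_r.
have oX : #|<[x]>| = r by rewrite -orderE.
have cardD : #|[set: 'D_r.*2]| = #|<[x]>|.*2 by rewrite card_dihedral // oX.
have oddX : odd #|<[x]>| by rewrite oX.
have boundX : 1 < #|<[x]>| <= 5 by rewrite oX gt1_r.
have [beta Abeta [nt_beta fixS invK]] :=
  generalized_dihedral_symmetric_aut y2 yNX conjyX cardD oddX boundX hS.
by exists beta => //; split=> // K oK; apply: invK; rewrite oK oX.
Qed.
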